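(* Let $A$ be an $N_-\times N_-$-variety which is also a positive variety with potential $(A,\Phi,\Theta)$. Let $a_1,\dots,a_n$ be positive rational functions on $(A,\Phi,\Theta)$ and let $(F,F')\in\mathfrak n_-\times\mathfrak n_-$. If $$\frac{F\cdot a_i\cdot F'}{a_i}\prec\Phi\quad\text{for all } i\in[1,n],$$ then $\dfrac{F\cdot f\cdot F'}{f}\prec\Phi$ for every subtraction-free Laurent polynomial $f=f(a_1,\dots,a_n)$ in the functions $a_i$.
   Context: $N_-$ is the unipotent radical of a Borel subgroup $B_-$ of a connected reductive complex group, $\mathfrak n_-$ its Lie algebra. An $N_-\times N_-$-variety is a variety with commuting left and right algebraic $N_-$-actions; for $(F,F')\in\mathfrak n_-\times\mathfrak n_-$ and a function $f$, $(F\cdot f\cdot F')(a)=\frac{d}{dt}|_{t=0}f(\exp(-tF)\,a\,\exp(tF'))$, which acts as a derivation. A toric chart on an irreducible complex variety $A$ is an open embedding $\theta$ of a complex algebraic torus into $A$. A rational function on a torus is positive if it is a ratio of two Laurent polynomials with nonnegative real coefficients (not both zero). A positive variety with potential $(A,\Phi,\Theta)$ consists of an irreducible complex variety $A$, a rational function $\Phi$ on $A$, and a non-empty set $\Theta$ of toric charts such that $\Phi\circ\theta$ is positive for some $\theta\in\Theta$ and $\theta^{-1}\circ\theta'$ is a positive map (all coordinates positive) for all $\theta,\theta'\in\Theta$; a rational function $f$ on $A$ is positive if $f\circ\theta$ is positive for some (equivalently any) $\theta\in\Theta$. A rational function $f$ is dominated by $\Phi$, written $f\prec\Phi$, if $f=f^+-f^-$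 with $f^\pm$ positive and there is a polynomial $p$ with positive real coefficients such that $p(\Phi)-f^+$ and $p(\Phi)-f^-$ are positive with respect to $\Theta$. *)

From HB Require Import structures.
From mathcomp Require Import all_boot all_order all_algebra.
From mathcomp Require Import reals.
From mathcomp Require Import mpoly.
From mathcomp Require Import complex.
From mathcomp Require Import fraction.
Set Implicit Arguments. Unset Strict Implicit. Unset Printing Implicit Defensive.
Import GRing.Theory Num.Theory.
Local Open Scope ring_scope.

(* Setting: we work in the coordinates of one toric chart
   theta in Theta of the positive variety A of dimension m.  Via theta, the
   field of rational functions C(A) is identified with the field of rational
   functions on the torus (C^x)^m, i.e. the fraction field of
   C[x_1,...,x_m]. *)

Definition ratf (R : realType) (m : nat) : fieldType :=
  {fraction {mpoly R[i][m]}}.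

Definition tofr (R : realType) (m : nat) (P : {mpoly R[i][m]}) : ratf R m :=
  @FracField.tofrac _ P.

Definition ratf_cst (R : realType) (m : nat) (c : R[i]) : ratf R m :=
  tofr (c%:MP).

(* polynomial with nonnegative real coefficients (0 <= z in C means z real, z >= 0) *)
Definition nonneg_mpoly (R : realType) (m : nat) (P : {mpoly R[i][m]}) : Prop :=
  forall mon : 'X_{1..m}, 0 <= P@_mon.

Definition nonneg_laurent (R : realType) (m : nat) (g : ratf R m) : Prop :=
  exists (P : {mpoly R[i][m]}) (mon : 'X_{1..m}),
    nonneg_mpoly P /\ g = tofr P / tofr ('X_[mon] : {mpoly R[i][m]}).

Definition positive (R : realType) (m : nat) (f : ratf R m) : Prop :=
  exists g h : ratf R m,
    [/\ nonneg_laurent g, nonneg_laurent h, h != 0 & f = g / h].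

Definition peval (R : realType) (m : nat) (p : {poly R}) (Phi : ratf R m)
  : ratf R m :=
  \sum_(j < size p) ratf_cst m ((p`_j)%:C%C) * Phi ^+ j.

Definition dominated (R : realType) (m : nat) (f Phi : ratf R m) : Prop :=
  exists fp fm : ratf R m,
    [/\ positive fp, positive fm, f = fp - fm &
      exists p : {poly R}, (forall j, 0 <= p`_j) /\
        positive (peval p Phi - fp) /\ positive (peval p Phi - fm)].

(* C-linear derivation of the field of rational functions; models the
   operator f |-> F . f . F' *)
Definition is_derivation (R : realType) (m : nat) (D : ratf R m -> ratf R m)
  : Prop :=
  [/\ forall x y, D (x + y) = D x + D y,
      forall x y, D (x * y) = D x * y + x * D y &
      forall c, D (ratf_cst m c) = 0].

Definition sf_laurent (R : realType) (m n k : nat) (c : 'I_k -> R)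
  (e : 'I_k -> 'I_n -> int) (a : 'I_n -> ratf R m) : ratf R m :=
  \sum_(j < k) ratf_cst m ((c j)%:C%C) * \prod_(i < n) a i ^ e j i.

From HB Require Import structures.
From mathcomp Require Import all_boot all_order all_algebra.
From mathcomp Require Import reals.
From mathcomp Require Import mpoly.
From mathcomp Require Import complex.
From mathcomp Require Import fraction.
Set Implicit Arguments. Unset Strict Implicit. Unset Printing Implicit Defensive.
Import GRing.Theory Num.Theory.
Local Open Scope ring_scope.

(* Write f = sum_j c_j M_j with monomials M_j = prod_i a_i ^ e_ji.  As D is a
   derivation, D f / f = sum_j w_j L_j, where L_j = sum_i e_ji (D a_i / a_i)
   and the weights w_j = c_j M_j / f are positive with sum 1.  The functions
   dominated by Phi form an additive group, so each L_j is dominated.  Since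
   Phi is positive, p(Phi) grows with p, so a single polynomial p bounds the
   positive and negative parts of every L_j, and then p(Phi) also bounds the
   corresponding parts of their convex combination. *)

Section Positivity.

Variables (R : realType) (m : nat).
Implicit Types (x y : ratf R m) (P Q : {mpoly R[i][m]}).

(* Convertible to [fun c => ratf_cst m c%:C]. *)
Definition ratf_of_real : {rmorphism R -> ratf R m} :=
  (@FracField.tofrac _ \o @mpolyC m R[i]) \o real_complex R.

Lemma nonneg_mpolyX (mon : 'X_{1..m}) : nonneg_mpoly ('X_[mon] : {mpoly R[i][m]}).
Proof. by move=> k; rewrite mcoeffX ler0n. Qed.

Lemma nonneg_mpolyD P Q : nonneg_mpoly P -> nonneg_mpoly Q -> nonneg_mpoly (P + Q).
Proof. by move=> P_ge0 Q_ge0 k; rewrite mcoeffD addr_ge0. Qed.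

Lemma nonneg_mpolyM P Q : nonneg_mpoly P -> nonneg_mpoly Q -> nonneg_mpoly (P * Q).
Proof.
by move=> P_ge0 Q_ge0 k; rewrite mcoeffM; apply: sumr_ge0 => i _; apply: mulr_ge0.
Qed.

Lemma tofr_X_neq0 (mon : 'X_{1..m}) : tofr ('X_[mon] : {mpoly R[i][m]}) != 0.
Proof.
rewrite /tofr tofrac_eq0; apply/eqP => /(congr1 (mcoeff mon)).
by rewrite mcoeffX eqxx mcoeff0 => /eqP; rewrite oner_eq0.
Qed.

Lemma nonneg_laurentD x y :
  nonneg_laurent x -> nonneg_laurent y -> nonneg_laurent (x + y).
Proof.
move=> [P [a [P_ge0 ->]]] [Q [b [Q_ge0 ->]]].
exists (P * 'X_[b] + Q * 'X_[a]), (a + b)%MM; split.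
  by apply: nonneg_mpolyD; apply: nonneg_mpolyM => //; apply: nonneg_mpolyX.
rewrite (addf_div _ _ (tofr_X_neq0 a) (tofr_X_neq0 b)) mpolyXD /tofr.
by rewrite !(tofracD, tofracM).
Qed.

Lemma nonneg_laurentM x y :
  nonneg_laurent x -> nonneg_laurent y -> nonneg_laurent (x * y).
Proof.
move=> [P [a [P_ge0 ->]]] [Q [b [Q_ge0 ->]]].
exists (P * Q), (a + b)%MM; split; first exact: nonneg_mpolyM.
by rewrite mpolyXD /tofr !tofracM invfM mulrACA.
Qed.

Lemma nonneg_laurent_real (c : R) : 0 <= c -> nonneg_laurent (ratf_of_real c).
Proof.
move=> c_ge0; exists (c%:C%C%:MP), 0%MM; split.
  by move=> k; rewrite mcoeffC mulr_ge0 ?ler0n // ler0c.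
by rewrite mpolyX0 /tofr tofrac1 divr1.
Qed.

Lemma positive_nonneg_laurent x : nonneg_laurent x -> positive x.
Proof.
move=> x_ge0; exists x, 1; split; rewrite ?divr1 ?oner_neq0 //.
by rewrite -(rmorph1 ratf_of_real); apply: nonneg_laurent_real.
Qed.

Lemma positive_real (c : R) : 0 <= c -> positive (ratf_of_real c).
Proof. by move=> c_ge0; apply/positive_nonneg_laurent/nonneg_laurent_real. Qed.

Lemma positive0 : positive (0 : ratf R m).
Proof. by rewrite -(rmorph0 ratf_of_real); apply: positive_real. Qed.

Lemma positive1 : positive (1 : ratf R m).
Proof. by rewrite -(rmorph1 ratf_of_real); apply: positive_real. Qed.

Lemma positiveD x y : positive x -> positive y -> positive (x + y).
Proof.
move=> [g1 [h1 [g1_ge0 h1_ge0 h1_neq0 ->]]] [g2 [h2 [g2_ge0 h2_ge0 h2_neq0 ->]]].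
exists (g1 * h2 + g2 * h1), (h1 * h2); split; last exact: addf_div.
- by apply: nonneg_laurentD; apply: nonneg_laurentM.
- exact: nonneg_laurentM.
- exact: mulf_neq0.
Qed.

Lemma positiveM x y : positive x -> positive y -> positive (x * y).
Proof.
move=> [g1 [h1 [g1_ge0 h1_ge0 h1_neq0 ->]]] [g2 [h2 [g2_ge0 h2_ge0 h2_neq0 ->]]].
exists (g1 * g2), (h1 * h2); split; last by rewrite invfM mulrACA.
- exact: nonneg_laurentM.
- exact: nonneg_laurentM.
- exact: mulf_neq0.
Qed.

Lemma positiveV x : positive x -> positive x^-1.
Proof.
move=> [g [h [g_ge0 h_ge0 h_neq0 ->]]].
have [->|g_neq0] := eqVneq g 0; first by rewrite mul0r invr0; apply: positive0.
by exists h, g; split; rewrite // invf_div.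
Qed.

Lemma positiveX x n : positive x -> positive (x ^+ n).
Proof.
move=> x_pos; elim: n => [|n IHn]; first by rewrite expr0; apply: positive1.
by rewrite exprS; apply: positiveM.
Qed.

Lemma positiveXz x (z : int) : positive x -> positive (x ^ z).
Proof.
move=> x_pos; case: z => n; first exact: positiveX.
exact/positiveV/positiveX.
Qed.

Lemma positive_sum (I : Type) (r : seq I) (P : pred I) (F : I -> ratf R m) :
  (forall i, P i -> positive (F i)) -> positive (\sum_(i <- r | P i) F i).
Proof.
by move=> F_pos; apply: big_ind => //; [apply: positive0 | apply: positiveD].
Qed.

Lemma positive_prod (I : Type) (r : seq I) (P : pred I) (F : I -> ratf R m) :
  (forall i, P i -> positive (F i)) -> positive (\prod_(i <- r | P i) F i).
Proof.
by move=> F_pos; apply: big_ind => //; [apply: positive1 | apply: positiveM].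
Qed.

Definition ple x y := positive (y - x).

Lemma ple_trans y x z : ple x y -> ple y z -> ple x z.
Proof. by move=> xy yz; rewrite /ple -(subrKA y); apply: positiveD. Qed.

Lemma pleD x1 y1 x2 y2 : ple x1 y1 -> ple x2 y2 -> ple (x1 + x2) (y1 + y2).
Proof. by move=> le1 le2; rewrite /ple opprD addrACA; apply: positiveD. Qed.

Lemma pleMl w x y : positive w -> ple x y -> ple (w * x) (w * y).
Proof. by move=> w_pos xy; rewrite /ple -mulrBr; apply: positiveM. Qed.

Lemma ple_addr x y : positive y -> ple x (x + y).
Proof. by rewrite /ple addrAC subrr add0r. Qed.

End Positivity.

Section PolynomialEvaluation.

Variables (R : realType) (m : nat).
Implicit Types (p q : {poly R}) (Phi : ratf R m).

Lemma pevalE p Phi : peval p Phi = (map_poly (ratf_of_real R m) p).[Phi].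
Proof. by rewrite horner_coef size_map_poly; apply: eq_bigr => j _; rewrite coef_map. Qed.

Lemma peval0 Phi : peval 0 Phi = 0.
Proof. by rewrite pevalE rmorph0 horner0. Qed.

Lemma pevalD p q Phi : peval (p + q) Phi = peval p Phi + peval q Phi.
Proof. by rewrite !pevalE rmorphD hornerD. Qed.

Lemma peval_sum (I : Type) (r : seq I) (F : I -> {poly R}) Phi :
  peval (\sum_(i <- r) F i) Phi = \sum_(i <- r) peval (F i) Phi.
Proof.
by rewrite pevalE rmorph_sum horner_sum; apply: eq_bigr => i _; rewrite pevalE.
Qed.

Lemma positive_peval p Phi :
  (forall j, 0 <= p`_j) -> positive Phi -> positive (peval p Phi).
Proof.
move=> p_ge0 Phi_pos; apply: positive_sum => j _.
by apply: positiveM; [apply: positive_real | apply: positiveX].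
Qed.

End PolynomialEvaluation.

Section Domination.

Variables (R : realType) (m : nat).
Implicit Types (f g B C Phi : ratf R m).

Definition dominated_by f B := exists fp fm,
  [/\ positive fp, positive fm, f = fp - fm, ple fp B & ple fm B].

Lemma dominatedP f Phi : dominated f Phi <->
  exists2 p : {poly R}, (forall j, 0 <= p`_j) & dominated_by f (peval p Phi).
Proof.
split.
  move=> [fp [fm [fp_pos fm_pos -> [p [p_ge0 [fp_le fm_le]]]]]].
  by exists p; last exists fp, fm.
move=> [p p_ge0 [fp [fm [fp_pos fm_pos -> fp_le fm_le]]]].
by exists fp, fm; split => //; exists p.
Qed.

Lemma dominated_by0 : dominated_by 0 0.
Proof. by exists 0, 0; split; rewrite /ple ?subr0 //; apply: positive0. Qed.

Lemma dominated_byN f B : dominated_by f B -> dominated_by (- f) B.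
Proof. by move=> [fp [fm [? ? -> ? ?]]]; exists fm, fp; split; rewrite // opprB. Qed.

Lemma dominated_byD f g B C :
  dominated_by f B -> dominated_by g C -> dominated_by (f + g) (B + C).
Proof.
move=> [fp [fm [fp_pos fm_pos -> fp_le fm_le]]] [gp [gm [gp_pos gm_pos -> gp_le gm_le]]].
exists (fp + gp), (fm + gm); split; try exact: positiveD; try exact: pleD.
by rewrite opprD addrACA.
Qed.

Lemma dominated_byMl w f B :
  positive w -> dominated_by f B -> dominated_by (w * f) (w * B).
Proof.
move=> w_pos [fp [fm [fp_pos fm_pos -> fp_le fm_le]]].
exists (w * fp), (w * fm); split; try exact: positiveM; try exact: pleMl.
by rewrite mulrBr.
Qed.

Lemma dominated_by_le f B C : ple B C -> dominated_by f B -> dominated_by f C.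
Proof.
move=> BC [fp [fm [fp_pos fm_pos -> fp_le fm_le]]].
by exists fp, fm; split => //; apply: ple_trans BC.
Qed.

Lemma dominated_by_sum (I : Type) (r : seq I) (F G : I -> ratf R m) :
  (forall i, dominated_by (F i) (G i)) ->
  dominated_by (\sum_(i <- r) F i) (\sum_(i <- r) G i).
Proof.
move=> FG; apply: (big_ind2 dominated_by) => //; first exact: dominated_by0.
by move=> *; apply: dominated_byD.
Qed.

Lemma dominated_by_convex (I : Type) (r : seq I) (w F : I -> ratf R m) B :
  (forall i, positive (w i)) -> \sum_(i <- r) w i = 1 ->
  (forall i, dominated_by (F i) B) -> dominated_by (\sum_(i <- r) w i * F i) B.
Proof.
move=> w_pos w_sum1 F_by; rewrite -[B]mul1r -w_sum1 mulr_suml.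
by apply: dominated_by_sum => i; apply: dominated_byMl.
Qed.

Lemma dominated0 Phi : dominated 0 Phi.
Proof.
apply/dominatedP; exists 0 => [j|]; first by rewrite coef0.
by rewrite peval0; apply: dominated_by0.
Qed.

Lemma dominatedN f Phi : dominated f Phi -> dominated (- f) Phi.
Proof.
move=> /dominatedP[p p_ge0 f_by].
by apply/dominatedP; exists p; last apply: dominated_byN.
Qed.

Lemma dominatedD f g Phi : dominated f Phi -> dominated g Phi -> dominated (f + g) Phi.
Proof.
move=> /dominatedP[p p_ge0 f_by] /dominatedP[q q_ge0 g_by].
apply/dominatedP; exists (p + q); first by move=> j; rewrite coefD addr_ge0.
by rewrite pevalD; apply: dominated_byD.
Qed.

Lemma dominatedMn f Phi n : dominated f Phi -> dominated (f *+ n) Phi.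
Proof.
move=> f_dom; elim: n => [|n IHn]; first by rewrite mulr0n; apply: dominated0.
by rewrite mulrS; apply: dominatedD.
Qed.

Lemma dominatedMz f Phi (z : int) : dominated f Phi -> dominated (f *~ z) Phi.
Proof.
move=> f_dom; case: z => n; first exact: dominatedMn.
by rewrite NegzE mulrNz; apply/dominatedN/dominatedMn.
Qed.

Lemma dominated_sum (I : Type) (r : seq I) (F : I -> ratf R m) Phi :
  (forall i, dominated (F i) Phi) -> dominated (\sum_(i <- r) F i) Phi.
Proof.
move=> F_dom; elim/big_ind: _ => //; [apply: dominated0 | move=> x y; apply: dominatedD].
Qed.

Lemma dominated_common_bound (I : finType) (F : I -> ratf R m) Phi :
  positive Phi -> (forall i, dominated (F i) Phi) ->
  exists2 p : {poly R}, (forall j, 0 <= p`_j) &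
    forall i, dominated_by (F i) (peval p Phi).
Proof.
move=> Phi_pos F_dom.
have /fin_all_exists[p pP] : forall i, exists p : {poly R},
    (forall j, 0 <= p`_j) /\ dominated_by (F i) (peval p Phi).
  by move=> i; have /dominatedP[p] := F_dom i; exists p.
exists (\sum_i p i) => [j|i].
  by rewrite coef_sum; apply: sumr_ge0 => i _; case: (pP i).
have [_ F_by] := pP i; apply: dominated_by_le F_by.
rewrite peval_sum (bigD1 i) //=; apply/ple_addr/positive_sum => l _.
by apply: positive_peval => //; case: (pP l).
Qed.

End Domination.

Section LogarithmicDerivative.

Variables (R : realType) (m : nat) (D : ratf R m -> ratf R m).
Hypothesis D_derivation : is_derivation D.
Implicit Types (x y L M : ratf R m).

Definition is_logder x L := D x = x * L.

Lemma derivation0 : D 0 = 0.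
Proof.
have [D_add _ _] := D_derivation.
by apply: (@addrI _ (D 0)); rewrite -D_add !addr0.
Qed.

Lemma derivation_sum (I : Type) (r : seq I) (F : I -> ratf R m) :
  D (\sum_(i <- r) F i) = \sum_(i <- r) D (F i).
Proof. by have [D_add _ _] := D_derivation; apply: (big_morph D D_add derivation0). Qed.

Lemma is_logder_real (c : R) : is_logder (ratf_of_real R m c) 0.
Proof. by have [_ _ D_cst] := D_derivation; rewrite /is_logder mulr0 D_cst. Qed.

Lemma is_logder1 : is_logder 1 0.
Proof. by rewrite -(rmorph1 (ratf_of_real R m)); apply: is_logder_real. Qed.

Lemma is_logder_quotient x : is_logder x (D x / x).
Proof.
rewrite /is_logder; have [->|x_neq0] := eqVneq x 0; first by rewrite mul0r derivation0.
by rewrite mulrC divfK.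
Qed.

Lemma is_logderM x y L M : is_logder x L -> is_logder y M -> is_logder (x * y) (L + M).
Proof.
have [_ D_mul _] := D_derivation.
by rewrite /is_logder D_mul => -> ->; rewrite mulrDr mulrAC mulrA.
Qed.

Lemma is_logderX x L n : is_logder x L -> is_logder (x ^+ n) (L *+ n).
Proof.
move=> xL; elim: n => [|n IHn]; first by rewrite expr0 mulr0n; apply: is_logder1.
by rewrite exprSr mulrSr; apply: is_logderM.
Qed.

Lemma is_logderV x L : is_logder x L -> is_logder x^-1 (- L).
Proof.
rewrite /is_logder => xL; have [->|x_neq0] := eqVneq x 0.
  by rewrite invr0 mul0r derivation0.
have [_ D_mul _] := D_derivation.
have : D (x * x^-1) = 0 by rewrite mulfV // is_logder1 mulr0.
rewrite D_mul xL mulrAC mulfV // mul1r => /eqP; rewrite addr_eq0 => /eqP xDxV.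
by rewrite -[D _](mulKf x_neq0) xDxV opprK.
Qed.

Lemma is_logderXz x L (z : int) : is_logder x L -> is_logder (x ^ z) (L *~ z).
Proof.
move=> xL; case: z => n; first exact: is_logderX.
by rewrite NegzE mulrNz; apply/is_logderV/is_logderX.
Qed.

Lemma is_logder_prod (I : Type) (r : seq I) (F G : I -> ratf R m) :
  (forall i, is_logder (F i) (G i)) ->
  is_logder (\prod_(i <- r) F i) (\sum_(i <- r) G i).
Proof.
move=> FG; apply: (big_ind2 is_logder) => //; first exact: is_logder1.
by move=> x y L M; apply: is_logderM.
Qed.

Lemma logder_sum (I : Type) (r : seq I) (F L : I -> ratf R m) :
  (forall i, is_logder (F i) (L i)) ->
  D (\sum_(i <- r) F i) / \sum_(i <- r) F i =
    \sum_(i <- r) F i / (\sum_(i <- r) F i) * L i.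
Proof.
move=> FL; rewrite derivation_sum mulr_suml.
by apply: eq_bigr => i _; rewrite FL mulrAC.
Qed.

End LogarithmicDerivative.

Unset Implicit Arguments.
Theorem lemma3p16 (R : realType) (m n : nat) (Phi : ratf R m)
  (D : ratf R m -> ratf R m) (hD : is_derivation D)
  (hPhi : positive Phi)
  (a : 'I_n -> ratf R m) (ha : forall i, positive (a i))
  (hdom : forall i, dominated (D (a i) / a i) Phi)
  (k : nat) (c : 'I_k -> R) (e : 'I_k -> 'I_n -> int)
  (hc : forall j, 0 <= c j) :
  dominated (D (sf_laurent c e a) / sf_laurent c e a) Phi.
Proof.
pose F j := ratf_of_real R m (c j) * \prod_(i < n) a i ^ e j i.
pose L j := \sum_(i < n) (D (a i) / a i) *~ e j i.
have F_pos j : positive (F j).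
  apply: positiveM; first exact: positive_real.
  by apply: positive_prod => i _; apply: positiveXz (ha i).
have F_logder j : is_logder D (F j) (L j).
  rewrite /L -[\sum_i _]add0r; apply: (is_logderM hD (is_logder_real hD _)).
  by apply: (is_logder_prod hD) => i; apply/(is_logderXz hD)/(is_logder_quotient hD).
have L_dom j : dominated (L j) Phi.
  by apply: dominated_sum => i; apply: dominatedMz (hdom i).
have [p p_ge0 L_by] := dominated_common_bound hPhi L_dom.
change (dominated (D (\sum_j F j) / \sum_j F j) Phi).
have [f0|f_neq0] := eqVneq (\sum_j F j) 0.
  by rewrite f0 invr0 mulr0; apply: dominated0.
rewrite (logder_sum hD _ F_logder); apply/dominatedP; exists p => //.
apply: dominated_by_convex L_by => [j|]; last by rewrite -mulr_suml divff.
by apply/positiveM/positiveV/positive_sum.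
Qed.
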